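(* Under the standing assumptions with Gaussian signaling $x\sim\mathcal{CN}(0,1)$, so that $\hat\phi(\rho)=1/(1+\rho)$, and $\mathbf A\neq\mathbf 0$ in the limit (i.e. $\hat\gamma(1)<1$), the equation $\hat\phi(\rho)=\eta^{-1}(\rho)$ has a unique positive solution, namely $$\rho^*_{\rm Gau}=[\hat\gamma(1)]^{-1}-1.$$
   Context: Standing assumptions (LUIS): $M,N\to\infty$ with $\beta=N/M$ fixed; $\mathbf A\in\mathbb C^{M\times N}$ right-unitarily invariant with the empirical eigenvalue distribution of $\mathbf A^{\mathrm H}\mathbf A$ converging to a compactly supported limit, $\frac1N\mathrm{tr}(\mathbf A^{\mathrm H}\mathbf A)\to1$; normalized traces denote large-system limits; $snr>0$. $\hat\phi(\rho)=\mathrm E|x-\mathrm E[x\mid\sqrt\rho x+z]|^2$ with $z\sim\mathcal{CN}(0,1)$ independent of $x$. $\hat\gamma(v)=\frac1N\mathrm{tr}\{(snr\,\mathbf A^{\mathrm H}\mathbf A+v^{-1}\mathbf I)^{-1}\}$ for $v>0$ (strictly increasing, inverse $\hat\gamma^{-1}$); $\eta(v)=v^{-1}-[\hat\gamma^{-1}(v)]^{-1}$, with inverse $\eta^{-1}$. *)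

From HB Require Import structures.
From mathcomp Require Import all_boot all_order all_algebra.
From mathcomp Require Import all_classical all_reals all_analysis.
Set Implicit Arguments. Unset Strict Implicit. Unset Printing Implicit Defensive.
Import Order.TTheory GRing.Theory Num.Theory.
Local Open Scope classical_set_scope.
Local Open Scope ring_scope.

(* The large-system limit of the empirical eigenvalue distribution of A^H A is
   modelled by a probability measure [mu] on the reals.  Normalized traces
   (1/N) tr f(A^H A) become integrals of f against [mu]. *)

(* gamma_hat(v) = (1/N) tr{(snr A^H A + v^{-1} I)^{-1}} in the limit. *)
Definition gammahat (R : realType) (mu : probability R R) (snr v : R) : R :=
  Rintegral mu setT (fun x : R => (snr * x + v^-1)^-1).

Definition in_range_gammahat (R : realType) (mu : probability R R) (snr v : R) : Prop :=
  exists u : R, 0 < u /\ gammahat mu snr u = v.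

(* gamma_hat^{-1}(v): a (the, since gamma_hat is strictly increasing) u > 0
   with gamma_hat(u) = v. *)
Definition gammahat_inv (R : realType) (mu : probability R R) (snr v : R) : R :=
  xget 1 [set u : R | 0 < u /\ gammahat mu snr u = v].

Definition eta (R : realType) (mu : probability R R) (snr v : R) : R :=
  v^-1 - (gammahat_inv mu snr v)^-1.

(* "v = eta^{-1}(rho)": v is in the domain of eta and eta(v) = rho. *)
Definition is_eta_inv (R : realType) (mu : probability R R) (snr rho v : R) : Prop :=
  in_range_gammahat mu snr v /\ eta mu snr v = rho.

Definition phihat_gau (R : realType) (rho : R) : R := (1 + rho)^-1.

From Pilot Require Import Defs.
From HB Require Import structures.
From mathcomp Require Import all_boot all_order all_algebra.
From mathcomp Require Import all_classical all_reals all_analysis.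
From mathcomp Require Import measurable_realfun.
From mathcomp Require Import ring lra.
Set Implicit Arguments. Unset Strict Implicit. Unset Printing Implicit Defensive.
Import Order.TTheory GRing.Theory Num.Theory.
Local Open Scope classical_set_scope.
Local Open Scope ring_scope.

(* Write gamma(v) = int (snr x + 1/v)^-1 dmu(x) and suppose mu is
   carried by a compact interval [0, B].  On [0, B] the integrand
   k_v(x) = v / (snr x v + 1) is bounded below by v / (snr B v + 1) > 0, and
   k_w - k_u = (w - u) / ((snr x w + 1)(snr x u + 1)) >= (w - u) / K for u < w,
   with K depending only on B.  Integrating these pointwise bounds against the
   probability mu shows that gamma is positive and strictly increasing on
   (0, oo); hence gamma^{-1}(gamma(u)) = u and eta(gamma(u)) = 1/gamma(u) - 1/u.
   For Gaussian signaling, phi(rho) = 1/(1 + rho), so v = phi(rho) solves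
   eta(v) = rho iff v = gamma(u) with 1 + rho - 1/u = rho, i.e. u = 1, which
   forces rho = 1/gamma(1) - 1; conversely this rho is positive (gamma(1) < 1)
   and satisfies the equation with u = 1.
   The file first proves the pointwise kernel estimates, then the measure
   theoretic facts about gamma, and finally the theorem. *)

(* The function x |-> 1/x is Borel measurable (it is continuous off 0). *)
Lemma measurable_inv (R : realType) : measurable_fun setT (GRing.inv : R -> R).
Proof.
have -> : [set: R] = [set 0] `|` ~` [set 0] by rewrite setUv.
apply/measurable_funU => //; first exact: measurableC.
split; first exact: measurable_fun_set1.
apply: open_continuous_measurable_fun.
  apply: closed_openC; apply: accessible_closed_set1.
  exact/hausdorff_accessible/Rhausdorff.
by move=> x /set_mem /eqP x0; apply: inv_continuous.
Qed.

Section resolvent_kernel.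
Variable R : realFieldType.
Implicit Types t u v w : R.

Lemma kernelE t v : 0 <= t -> 0 < v -> (t + v^-1)^-1 = v / (t * v + 1).
Proof. by move=> t0 v0; field; apply/andP; split; apply: lt0r_neq0; nra. Qed.

Lemma kernel_bounds t T v : 0 <= t <= T -> 0 < v ->
  v / (T * v + 1) <= (t + v^-1)^-1 <= v.
Proof.
move=> /andP[t0 tT] v0; rewrite kernelE //.
have tv0 : 0 <= t * v by rewrite mulr_ge0 // ltW.
have tvT : t * v <= T * v by rewrite ler_pM2r.
apply/andP; split.
  by rewrite ler_pM2l // lef_pV2 ?posrE; lra.
by rewrite ler_pdivrMr; nra.
Qed.

Lemma kernel_increment t T u w : 0 <= t <= T -> 0 < u -> u < w ->
  (w - u) / ((T * w + 1) * (T * u + 1)) <= (t + w^-1)^-1 - (t + u^-1)^-1.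
Proof.
move=> /andP[t0 tT] u0 uw; have w0 := lt_trans u0 uw.
rewrite !kernelE //.
have tu0 : 0 <= t * u by rewrite mulr_ge0 // ltW.
have tw0 : 0 <= t * w by rewrite mulr_ge0 // ltW.
have tuT : t * u <= T * u by rewrite ler_pM2r.
have twT : t * w <= T * w by rewrite ler_pM2r.
have -> : w / (t * w + 1) - u / (t * u + 1) =
          (w - u) / ((t * w + 1) * (t * u + 1)).
  by field; apply/andP; split; apply: lt0r_neq0; lra.
rewrite ler_pM2l ?subr_gt0 // lef_pV2 ?posrE; try by apply: mulr_gt0; lra.
by apply: ler_pM; lra.
Qed.

End resolvent_kernel.

Section gammahat_monotone.
Variables (R : realType) (mu : probability R R) (snr B : R).
Hypothesis snr_gt0 : 0 < snr.
Hypothesis mu_support : mu `[0, B]%classic = 1%E.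

Let S := `[0, B]%classic : set R.
Let kernel (v x : R) : R := (snr * x + v^-1)^-1.

Let measurable_S : measurable S. Proof. exact: measurable_itv. Qed.

Let mu_outside : mu (~` S) = 0%E.
Proof. by rewrite probability_setC // mu_support subee. Qed.

Let mu_S1 : fine (mu S) = 1.
Proof. by rewrite /S mu_support. Qed.

Let snr_support x : S x -> 0 <= snr * x <= snr * B.
Proof.
rewrite /S /= in_itv /= => /andP[x0 xB].
by rewrite (mulr_ge0 (ltW snr_gt0) x0) ler_pM2l.
Qed.

Let snrB_ge0 : 0 <= snr * B.
Proof.
have [x Sx] : S !=set0.
  apply/set0P/eqP => S0; move: mu_support; rewrite -/S S0 measure0.
  by case=> /esym/eqP; rewrite oner_eq0.
by case/andP: (snr_support Sx) => sx0 sxB; apply: le_trans sxB.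
Qed.

Let measurable_kernel v : measurable_fun setT (kernel v).
Proof.
apply: (measurableT_comp (@measurable_inv R)).
by apply: measurable_funD => //; exact: measurable_cst.
Qed.

Lemma gammahat_support v : gammahat mu snr v = \int[mu]_(x in S) kernel v x.
Proof.
rewrite /gammahat [RHS]Rintegral_mkcond /Rintegral; congr fine.
apply: ae_eq_integral => //.
- by apply/measurable_EFinP; exact: measurable_kernel.
- apply/measurable_EFinP; apply/(measurable_restrict _ _ _) => //.
  by rewrite setTI; apply: measurable_funTS.
- exists (~` S); split; first exact: measurableC.
    exact: mu_outside.
  move=> x /= neq Sx; apply: neq => _.
  by rewrite /patch ifT //; apply/mem_set.
Qed.

Let bounded_integrable (h : R -> R) (M : R) : measurable_fun setT h ->
  (forall x, S x -> `|h x| <= M) -> mu.-integrable S (EFin \o h).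
Proof.
move=> mh hM; apply: (le_integrable measurable_S (g := EFin \o cst M)).
- by apply/measurable_EFinP; exact: measurable_funTS.
- by move=> x Sx /=; rewrite lee_fin (le_trans (hM x Sx)) // ler_norm.
- exact: finite_measure_integrable_cst.
Qed.

Let Rintegral_ge_cst (h : R -> R) (c M : R) : measurable_fun setT h ->
  (forall x, S x -> `|h x| <= M) -> (forall x, S x -> c <= h x) ->
  c <= \int[mu]_(x in S) h x.
Proof.
move=> mh hM ch.
have -> : c = \int[mu]_(x in S) c by rewrite Rintegral_cst // mu_S1 mulr1.
apply: le_Rintegral => //; first exact: finite_measure_integrable_cst.
exact: bounded_integrable hM.
Qed.

Let kernel_bounded v x : 0 < v -> S x -> `|kernel v x| <= v.
Proof.
move=> v0 /snr_support sx; have /andP[lo hi] := kernel_bounds sx v0.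
rewrite ger0_norm // (le_trans _ lo) // divr_ge0 ?ltW //.
by rewrite ltr_wpDl // mulr_ge0 // ltW.
Qed.

Lemma gammahat_gt0 v : 0 < v -> 0 < gammahat mu snr v.
Proof.
move=> v0; rewrite gammahat_support.
apply: (@lt_le_trans _ _ (v / (snr * B * v + 1))).
  by rewrite divr_gt0 // ltr_wpDl // mulr_ge0 // ltW.
apply: (Rintegral_ge_cst (M := v)) => // [x|x /snr_support sx].
  exact: kernel_bounded.
by have /andP[] := kernel_bounds sx v0.
Qed.

Lemma gammahat_lt u w : 0 < u -> u < w -> gammahat mu snr u < gammahat mu snr w.
Proof.
move=> u0 uw; have w0 := lt_trans u0 uw.
have intk v : 0 < v -> mu.-integrable S (EFin \o kernel v).
  by move=> v0; apply: (bounded_integrable (M := v)) => // x; apply: kernel_bounded.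
rewrite !gammahat_support -subr_gt0 -RintegralB ?intk //.
set K := (snr * B * w + 1) * (snr * B * u + 1).
apply: (@lt_le_trans _ _ ((w - u) / K)).
  by rewrite divr_gt0 ?subr_gt0 // mulr_gt0 // ltr_wpDl // mulr_ge0 // ltW.
apply: (Rintegral_ge_cst (M := w + u)) => [|x Sx|x /snr_support sx].
- exact: measurable_funB.
- rewrite (le_trans (ler_normB _ _)) // lerD //; exact: kernel_bounded.
- exact: kernel_increment.
Qed.

Lemma gammahat_invK u : 0 < u -> gammahat_inv mu snr (gammahat mu snr u) = u.
Proof.
move=> u0; apply: xget_unique => // y [y0 eq_y].
case: (ltgtP y u) => // [yu|uy].
- by have := gammahat_lt y0 yu; rewrite eq_y ltxx.
- by have := gammahat_lt u0 uy; rewrite eq_y ltxx.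
Qed.

(* eta in closed form along the graph of gamma ([Defs.] disambiguates from the
   Hierarchy-Builder constant [eta]). *)
Lemma eta_gammahat u : 0 < u ->
  Defs.eta mu snr (gammahat mu snr u) = (gammahat mu snr u)^-1 - u^-1.
Proof. by move=> u0; rewrite /Defs.eta gammahat_invK. Qed.

End gammahat_monotone.

Theorem lemma7 (R : realType) (mu : probability R R) (snr : R) :
  0 < snr ->
  (exists B : R, mu `[0, B]%classic = 1%E) ->
  ((\int[mu]_x (x%:E))%E = 1%E) ->
  gammahat mu snr 1 < 1 ->
  let rho_gau := (gammahat mu snr 1)^-1 - 1 in
  [/\ 0 < rho_gau,
      is_eta_inv mu snr rho_gau (phihat_gau rho_gau)
    & forall rho : R, 0 < rho ->
        is_eta_inv mu snr rho (phihat_gau rho) -> rho = rho_gau].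
Proof.
move=> snr0 [B muS] _ g1_lt1 rho_gau.
have g1_gt0 := gammahat_gt0 snr0 muS ltr01.
have eta_g := eta_gammahat snr0 muS.
have phi_rho_gau : phihat_gau rho_gau = gammahat mu snr 1.
  by rewrite /phihat_gau /rho_gau addrC subrK invrK.
split.
- by rewrite /rho_gau subr_gt0 invf_gt1.
- rewrite phi_rho_gau; split; first by exists 1.
  by rewrite eta_g // invr1.
- move=> rho rho0 [[u [u0 gu]] eta_rho].
  (* eta(gamma(u)) = (1 + rho) - 1/u = rho forces u = 1. *)
  move: eta_rho; rewrite -gu eta_g // gu /phihat_gau invrK => eq_rho.
  have u1 : u = 1 by rewrite -[u]invrK (_ : u^-1 = 1) ?invr1 //; lra.
  have g1 : gammahat mu snr 1 = phihat_gau rho by rewrite -u1.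
  by rewrite /rho_gau g1 /phihat_gau invrK addrC addKr.
Qed.
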